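(* Let $G=(V,E)$ be a $k$-uniform linear hypergraph with an edge correspondence $\sigma$ and weighted lists of colours $(L,\mu)$ assigned to its edges, where every list $L(e)$ is finite. Let $\ell,n>0$ be such that, for all $e\in E$: (i) $\ell/n\ge 3ek$ (here $e$ in $3ek$ denotes Euler's number); (ii) $|L(e)|_\mu\ge\ell$; (iii) $|N_{G,L,\sigma}(e,v,c)|_\mu\le n$ for all $v\in e$ and $c\in L(e)$. Then $G$ has an $(L,\sigma)$-colouring.
   Context: A hypergraph is $k$-uniform if every edge has exactly $k$ vertices, and linear if any two distinct edges share at most one vertex; distinct edges sharing a vertex are adjacent. Colours are positive integers. A weighted list assignment $(L,\mu)$ gives each edge $e$ a list $L(e)\subseteq\mathbb{N}$ and weights $\mu(e)\colon L(e)\to(0,1]$, written $\mu(e,c)$; for $A\subseteq E\times\mathbb{N}$, $|A|_\mu=\sum_{(e,c)\in A}\mu(e,c)$ and $|L(e)|_\mu=\sum_{c\in L(e)}\mu(e,c)$. An edge correspondence $\sigma$ consists of permutations $\sigma_{e,f}$ of $\mathbb{N}$ for all adjacent edges $e,f$ with $\sigma_{e,f}=\sigma_{f,e}^{-1}$; $(e,c)$ blocks $(f,c')$ if $\sigma_{e,f}(c)=c'$. An $(L,\sigma)$-colouring is $\gamma\colon E\to\mathbb{N}$ with $\gamma(e)\in L(e)$ such that $(e,\gamma(e))$ does not block $(f,\gamma(f))$ for all adjacent $e,f$. $N_{G,L,\sigma}(e,v,c)$ is the set of pairs $(f,c')$ with $v\in f$, $f\ne e$, $c'\in L(f)$ and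 $(f,c')$ blocking $(e,c)$. *)

From HB Require Import structures.
From mathcomp Require Import all_boot all_order all_algebra.
From mathcomp Require Import reals.
From mathcomp Require Import sequences exp.
Set Implicit Arguments. Unset Strict Implicit. Unset Printing Implicit Defensive.
Import Order.TTheory GRing.Theory Num.Theory.
Local Open Scope ring_scope.

Section Hyper.
Variable V : finType.

Definition uniform (k : nat) (E : {set {set V}}) : Prop :=
  forall e, e \in E -> #|e| = k.

Definition linear_hg (E : {set {set V}}) : Prop :=
  forall e f, e \in E -> f \in E -> e != f -> (#|e :&: f| <= 1)%N.

Definition adjacent (e f : {set V}) : bool := (e != f) && (e :&: f != set0).

Definition edge_correspondence (E : {set {set V}})
  (sigma : {set V} -> {set V} -> nat -> nat) : Prop :=
  forall e f, e \in E -> f \in E -> adjacent e f ->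
    cancel (sigma e f) (sigma f e).

Definition blocks (sigma : {set V} -> {set V} -> nat -> nat)
  (e : {set V}) (c : nat) (f : {set V}) (c' : nat) : bool :=
  sigma e f c == c'.

Definition Lsigma_colouring (E : {set {set V}}) (L : {set V} -> seq nat)
  (sigma : {set V} -> {set V} -> nat -> nat) (gamma : {set V} -> nat) : Prop :=
  (forall e, e \in E -> gamma e \in L e) /\
  (forall e f, e \in E -> f \in E -> adjacent e f ->
     ~~ blocks sigma e (gamma e) f (gamma f)).

(* weighted size of a list: |L(e)|_mu (lists are duplicate-free) *)
Definition list_weight (R : numDomainType) (L : {set V} -> seq nat)
  (mu : {set V} -> nat -> R) (e : {set V}) : R :=
  \sum_(c <- L e) mu e c.

Definition nbhd_weight (R : numDomainType) (E : {set {set V}})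
  (L : {set V} -> seq nat) (mu : {set V} -> nat -> R)
  (sigma : {set V} -> {set V} -> nat -> nat)
  (e : {set V}) (v : V) (c : nat) : R :=
  \sum_(f in E | (v \in f) && (f != e))
     \sum_(c' <- L f | blocks sigma f c' e c) mu f c'.

End Hyper.

(* For a duplicate-free sequence s of edges let C(s) be the
   sum, over all (L, sigma)-colourings g of the edges in s, of
   prod_(e in s) mu(e, g e).  By induction on |s|, C(s) >= l/2 * C(s - x) for
   every x in s: a colouring of s - x extends by a colour c of x unless some
   adjacent f has a colour d such that (f, d) blocks (x, c); by induction the
   colourings of s - x giving f the colour d weigh at most
   2/l * C(s - x) * mu(f, d), and the pairs blocking (x, c) weigh at most kn, so
   C(s) >= |L(x)|_mu * C(s - x) * (1 - 2kn/l) >= l/2 * C(s - x) as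
   l >= 3ekn >= 4kn.  Hence C(E) > 0. *)

From Pilot Require Import Defs.
From HB Require Import structures.
From mathcomp Require Import all_boot all_order all_algebra.
From mathcomp Require Import reals.
From mathcomp Require Import sequences exp.
From Stdlib Require Import FunctionalExtensionality.
From mathcomp Require Import ring lra.
Import Order.TTheory GRing.Theory Num.Theory.
Local Open Scope ring_scope.
Set Implicit Arguments. Unset Strict Implicit. Unset Printing Implicit Defensive.

Lemma sumr_neq0_witness (R : nmodType) (I : eqType) (r : seq I) (F : I -> R) :
  \sum_(i <- r) F i != 0 -> exists2 i, i \in r & F i != 0.
Proof.
move=> nz; apply/hasP; apply: contraNT nz => /hasPn F0.
by apply/eqP/big1_seq => i /andP[_ /F0 /negPn /eqP].
Qed.

Lemma sumr_le_sub_uniq (R : numDomainType) (I : finType) (r : seq I)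
    (A : {pred I}) (P : pred I) (F : I -> R) :
  uniq r -> {subset r <= A} -> (forall i, i \in A -> P i -> 0 <= F i) ->
  \sum_(i <- r | P i) F i <= \sum_(i in A | P i) F i.
Proof.
move=> ur rA F0; rewrite -big_filter big_uniq ?filter_uniq //.
rewrite [leRHS](bigID (mem (filter P r))) /=.
rewrite [leLHS](eq_bigl (fun i => ((i \in A) && P i) && (i \in filter P r))).
  by rewrite lerDl; apply: sumr_ge0 => i /andP[/andP[Ai Pi] _]; exact: F0.
move=> i /=; rewrite mem_filter.
by case: (P i); case ir: (i \in r); rewrite ?andbF ?andbT ?(rA _ ir).
Qed.

Section Assignments.
Variables (V : finType) (L : {set V} -> seq nat).

Definition update (g : {set V} -> nat) (x : {set V}) (c : nat) : {set V} -> nat :=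
  fun e => if e == x then c else g e.

Lemma update_eq g x c : update g x c x = c.
Proof. by rewrite /update eqxx. Qed.

Lemma update_neq g x c e : e != x -> update g x c e = g e.
Proof. by rewrite /update => /negbTE ->. Qed.

Lemma update_comm g x y c d :
  x != y -> update (update g x c) y d = update (update g y d) x c.
Proof.
move=> nxy; apply: functional_extensionality => e; rewrite /update.
by case: (eqVneq e y) => [->|//]; rewrite eq_sym (negbTE nxy).
Qed.

(* Every choice of colours [g e \in L e] for [e \in s], listed with multiplicity
   and extended by [0] outside [s]. *)
Fixpoint assignments (s : seq {set V}) : seq ({set V} -> nat) :=
  if s is x :: s' then
    flatten [seq [seq update g x c | c <- L x] | g <- assignments s']
  else [:: fun _ => 0%N].

Lemma big_assignments_cons (R : nmodType) x s (F : ({set V} -> nat) -> R) :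
  \sum_(g <- assignments (x :: s)) F g =
  \sum_(g <- assignments s) \sum_(c <- L x) F (update g x c).
Proof. by rewrite /= big_flatten big_map; apply: eq_bigr => g _; rewrite big_map. Qed.

Lemma big_assignments_rem (R : nmodType) s x (F : ({set V} -> nat) -> R) :
  uniq s -> x \in s ->
  \sum_(g <- assignments s) F g =
  \sum_(g <- assignments (rem x s)) \sum_(c <- L x) F (update g x c).
Proof.
elim: s F => [//|y s IH] F /= /andP[ys us]; rewrite in_cons.
case: (eqVneq y x) => [->|nyx] /= xs; first by rewrite big_assignments_cons.
rewrite !big_assignments_cons (IH _ us xs); apply: eq_bigr => g _.
rewrite exchange_big; apply: eq_bigr => c _; apply: eq_bigr => d _.
by rewrite update_comm // eq_sym.
Qed.

Lemma big_assignments_neq0 (R : nmodType) s (F : ({set V} -> nat) -> R) :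
  \sum_(g <- assignments s) F g != 0 ->
  exists g, (forall e, e \in s -> g e \in L e) /\ F g != 0.
Proof.
elim: s F => [|x s IH] F; first by rewrite big_seq1; exists (fun _ => 0%N).
rewrite big_assignments_cons => /IH[g [gL /sumr_neq0_witness[c cL Fc]]].
exists (update g x c); split=> // e; rewrite in_cons.
by case: (eqVneq e x) => [->|nex] /= es; rewrite ?update_eq ?update_neq ?gL.
Qed.

End Assignments.

Lemma adjacentC (V : finType) (e f : {set V}) :
  Defs.adjacent e f = Defs.adjacent f e.
Proof. by rewrite /Defs.adjacent eq_sym setIC. Qed.

Lemma adjacentxx (V : finType) (e : {set V}) : Defs.adjacent e e = false.
Proof. by rewrite /Defs.adjacent eqxx. Qed.

Section WeightCongruence.
Variables (R : numDomainType) (V : finType) (E : {set {set V}})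
  (sigma : {set V} -> {set V} -> nat -> nat) (L : {set V} -> seq nat)
  (mu mu' : {set V} -> nat -> R).
Hypothesis eq_mu : forall e c, e \in E -> c \in L e -> mu e c = mu' e c.

Lemma eq_list_weight x : x \in E -> list_weight L mu x = list_weight L mu' x.
Proof. by move=> xE; apply: eq_big_seq => c /(eq_mu xE). Qed.

Lemma eq_nbhd_weight x v c :
  nbhd_weight E L mu sigma x v c = nbhd_weight E L mu' sigma x v c.
Proof.
apply: eq_bigr => f /andP[fE _].
by rewrite big_seq_cond [RHS]big_seq_cond; apply: eq_bigr => d /andP[/(eq_mu fE) ->].
Qed.

End WeightCongruence.

Section ProperWeight.
Variables (R : numDomainType) (V : finType) (E : {set {set V}})
  (sigma : {set V} -> {set V} -> nat -> nat)
  (L : {set V} -> seq nat) (mu : {set V} -> nat -> R).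
Hypothesis mu_ge0 : forall e c, 0 <= mu e c.
Hypothesis sigmaK : edge_correspondence E sigma.

Definition weight (s : seq {set V}) (g : {set V} -> nat) : R :=
  \prod_(e <- s) mu e (g e).

Definition proper (s : seq {set V}) (g : {set V} -> nat) : bool :=
  all (fun e => all (fun f =>
    Defs.adjacent e f ==> ~~ blocks sigma e (g e) f (g f)) s) s.

Definition proper_weight (s : seq {set V}) : R :=
  \sum_(g <- assignments L s) weight s g * (proper s g)%:R.

Definition blocked_weight (x f : {set V}) (d : nat) : R :=
  (Defs.adjacent x f)%:R * \sum_(c <- L x) mu x c * (blocks sigma f d x c)%:R.

Lemma weight_ge0 s g : 0 <= weight s g.
Proof. exact: prodr_ge0. Qed.

Lemma blocked_weight_ge0 x f d : 0 <= blocked_weight x f d.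
Proof. by rewrite mulr_ge0 ?sumr_ge0 // => c _; rewrite mulr_ge0. Qed.

Lemma proper_weight_nil : proper_weight [::] = 1.
Proof. by rewrite /proper_weight /= big_seq1 /weight big_nil mul1r. Qed.

Lemma weight_update s x g c : uniq s -> x \in s ->
  weight s (update g x c) = mu x c * weight (rem x s) g.
Proof.
move=> us xs; rewrite /weight (perm_big _ (perm_to_rem xs)) big_cons update_eq.
congr (_ * _); apply: eq_big_seq => e; rewrite mem_rem_uniq // => /andP[ex _].
by rewrite update_neq.
Qed.

Lemma proper_update_rem s x g c : uniq s -> x \in s ->
  proper s (update g x c) -> proper (rem x s) g.
Proof.
move=> us xs /allP sP; apply/allP => e; rewrite mem_rem_uniq // => /andP[ex es].
apply/allP => f; rewrite mem_rem_uniq // => /andP[fx fs].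
by have /allP/(_ f fs) := sP e es; rewrite !update_neq.
Qed.

Lemma proper_update s x g c : uniq s -> x \in s -> {subset s <= E} ->
  proper (rem x s) g ->
  ~~ has (fun f => Defs.adjacent x f && blocks sigma f (g f) x c) (rem x s) ->
  proper s (update g x c).
Proof.
move=> us xs sE /allP gP /hasPn free.
have unblocked f : f \in s -> f != x -> Defs.adjacent x f ->
    ~~ blocks sigma f (g f) x c.
  by move=> fs fx xf; have := free f; rewrite mem_rem_uniq // inE fx fs xf; apply.
apply/allP => e es; apply/allP => f fs.
case: (eqVneq e x) => [->|ex]; case: (eqVneq f x) => [->|fx].
- by rewrite adjacentxx.
- (* (x, c) blocks (f, g f) exactly when (f, g f) blocks (x, c) *)
  apply/implyP => xf; rewrite update_eq update_neq //.
  apply: contra (unblocked f fs fx xf) => /eqP <-.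
  by rewrite /blocks (sigmaK (sE x xs) (sE f fs) xf).
- by apply/implyP => ex'; rewrite update_eq update_neq // unblocked // adjacentC.
- rewrite !update_neq //.
  by have /allP := gP e (rem_mem ex es); apply; exact: rem_mem.
Qed.

Lemma proper_update_ge s x g c : uniq s -> x \in s -> {subset s <= E} ->
  (proper (rem x s) g)%:R *
    (1 - (count (fun f => Defs.adjacent x f && blocks sigma f (g f) x c)
                (rem x s))%:R)
  <= (proper s (update g x c))%:R :> R.
Proof.
move=> us xs sE; case gP: (proper (rem x s) g); last by rewrite mul0r ler0n.
set blocking := fun f => _ && _.
have [blocked|free] := boolP (has blocking (rem x s)).
  by apply: le_trans (ler0n _ _); rewrite mul1r subr_le0 ler1n -has_count.
by rewrite proper_update // mul1r lerBlDr lerDl ler0n.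
Qed.

Lemma sum_blocked_weight x r g :
  \sum_(f <- r) blocked_weight x f (g f) =
  \sum_(c <- L x) mu x c *
    (count (fun f => Defs.adjacent x f && blocks sigma f (g f) x c) r)%:R.
Proof.
under [RHS]eq_bigr => c _ do
  rewrite -sumn_count sumnE big_map natr_sum mulr_sumr.
rewrite exchange_big /=; apply: eq_bigr => f _.
rewrite /blocked_weight mulr_sumr; apply: eq_bigr => c _.
by rewrite -mulnb natrM mulrCA.
Qed.

Lemma proper_weight_rem_ge s x : uniq s -> x \in s -> {subset s <= E} ->
  list_weight L mu x * proper_weight (rem x s) -
  \sum_(g <- assignments L (rem x s))
     weight (rem x s) g * (proper (rem x s) g)%:R *
     \sum_(f <- rem x s) blocked_weight x f (g f)
  <= proper_weight s.
Proof.
move=> us xs sE; set r := rem x s.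
rewrite /proper_weight (big_assignments_rem _ _ us xs) mulr_sumr -sumrB.
apply: ler_sum => g _; rewrite sum_blocked_weight /list_weight.
rewrite mulr_suml mulr_sumr -sumrB; apply: ler_sum => c _.
rewrite weight_update //.
have W0 : 0 <= mu x c * weight r g by rewrite mulr_ge0 ?weight_ge0.
apply: le_trans (ler_wpM2l W0 (proper_update_ge g c us xs sE)).
by rewrite le_eqVlt; apply/orP; left; apply/eqP; ring.
Qed.

Lemma proper_weight_ge0 s : 0 <= proper_weight s.
Proof. by apply: sumr_ge0 => g _; rewrite mulr_ge0 ?weight_ge0. Qed.

Lemma proper_weight_marginal_le s f (h : nat -> R) :
  uniq s -> f \in s -> (forall d, 0 <= h d) ->
  \sum_(g <- assignments L s) weight s g * (proper s g)%:R * h (g f)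
  <= proper_weight (rem f s) * \sum_(d <- L f) mu f d * h d.
Proof.
move=> us fs h0; rewrite (big_assignments_rem _ _ us fs) /proper_weight mulr_suml.
apply: ler_sum => g _; rewrite mulr_sumr; apply: ler_sum => d _.
rewrite weight_update // update_eq.
case gP: (proper s (update g f d)); last by rewrite mulr0 mul0r !mulr_ge0 ?weight_ge0.
by rewrite (proper_update_rem us fs gP) !mulr1 mulrCA mulrA.
Qed.

Lemma proper_weight_colouring :
  0 < proper_weight (enum E) -> exists gamma, Lsigma_colouring E L sigma gamma.
Proof.
move=> /lt0r_neq0 /big_assignments_neq0 [g [gL]].
case gP: (proper _ g); last by rewrite mulr0 eqxx.
move=> _; exists g; split=> [e eE|e f eE fE ef]; first by rewrite gL ?mem_enum.
move/allP: gP => /(_ e); rewrite mem_enum => /(_ eE) /allP /(_ f).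
by rewrite mem_enum ef; apply.
Qed.

Variables (k : nat) (n : R).
Hypothesis E_uniform : uniform k E.
Hypothesis nbhd_weight_le : forall x v c, x \in E -> v \in x -> c \in L x ->
  nbhd_weight E L mu sigma x v c <= n.

Lemma sum_adjacent_blocking_le x c r :
  x \in E -> c \in L x -> uniq r -> {subset r <= E} ->
  \sum_(f <- r) (Defs.adjacent x f)%:R * \sum_(d <- L f | blocks sigma f d x c) mu f d
  <= k%:R * n.
Proof.
move=> xE cL ur rE.
set Q := fun f => \sum_(d <- L f | blocks sigma f d x c) mu f d.
have Q0 f : 0 <= Q f by apply: sumr_ge0.
(* an edge adjacent to x is counted in the neighbourhood of a common vertex *)
have adjacent_le f : (Defs.adjacent x f)%:R * Q f <=
    \sum_(v in x) (if (v \in f) && (f != x) then Q f else 0).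
  case xf: (Defs.adjacent x f); last by rewrite mul0r sumr_ge0 // => v _; case: ifP.
  move: xf => /andP[xf /set0Pn[v]]; rewrite inE => /andP[vx vf].
  rewrite (bigD1 v) //= vf eq_sym xf mul1r lerDl.
  by apply: sumr_ge0 => w _; case: ifP.
apply: le_trans (ler_sum _ (fun f _ => adjacent_le f)) _; rewrite exchange_big /=.
rewrite mulr_natl -(E_uniform xE) -sumr_const; apply: ler_sum => v vx.
apply: le_trans (nbhd_weight_le xE vx cL); rewrite -big_mkcond /=.
by apply: sumr_le_sub_uniq => // f _ _; apply: Q0.
Qed.

Lemma sum_blocked_weight_le x r : x \in E -> uniq r -> {subset r <= E} ->
  \sum_(f <- r) \sum_(d <- L f) mu f d * blocked_weight x f d
  <= list_weight L mu x * (k%:R * n).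
Proof.
move=> xE ur rE.
have -> : \sum_(f <- r) \sum_(d <- L f) mu f d * blocked_weight x f d =
    \sum_(c <- L x) mu x c * \sum_(f <- r) (Defs.adjacent x f)%:R *
      \sum_(d <- L f | blocks sigma f d x c) mu f d.
  under [RHS]eq_bigr => c _ do rewrite mulr_sumr.
  rewrite [RHS]exchange_big /=; apply: eq_bigr => f _.
  under [RHS]eq_bigr => c _ do rewrite big_mkcond !mulr_sumr.
  rewrite [RHS]exchange_big /=; apply: eq_bigr => d _.
  rewrite /blocked_weight !mulr_sumr; apply: eq_bigr => c _.
  by case: blocks => /=; ring.
rewrite /list_weight mulr_suml big_seq [leRHS]big_seq.
apply: ler_sum => c cL; rewrite ler_wpM2l //.
exact: sum_adjacent_blocking_le.
Qed.

End ProperWeight.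

Section Counting.
Variables (R : realFieldType) (V : finType) (E : {set {set V}})
  (sigma : {set V} -> {set V} -> nat -> nat)
  (L : {set V} -> seq nat) (mu : {set V} -> nat -> R) (k : nat) (l n : R).
Hypothesis mu_ge0 : forall e c, 0 <= mu e c.
Hypothesis sigmaK : edge_correspondence E sigma.
Hypothesis E_uniform : uniform k E.
Hypothesis list_weight_ge : forall x, x \in E -> l <= list_weight L mu x.
Hypothesis nbhd_weight_le : forall x v c, x \in E -> v \in x -> c \in L x ->
  nbhd_weight E L mu sigma x v c <= n.
Hypothesis l_gt0 : 0 < l.
Hypothesis l_ge_4kn : 4 * (k%:R * n) <= l.

Local Notation C := (proper_weight sigma L mu).

Lemma proper_weight_rem_step s x : uniq s -> x \in s -> {subset s <= E} ->
  (forall f, f \in rem x s ->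
     l / 2 * C (rem f (rem x s)) <= C (rem x s)) ->
  l / 2 * C (rem x s) <= C s.
Proof.
move=> us xs sE IH; set r := rem x s.
have ur : uniq r := rem_uniq x us.
have rE : {subset r <= E} by move=> f /mem_rem /sE.
have xE := sE x xs.
set B := \sum_(g <- assignments L r) weight mu r g * (proper sigma r g)%:R *
  \sum_(f <- r) blocked_weight sigma L mu x f (g f).
set T := \sum_(f <- r) \sum_(d <- L f) mu f d * blocked_weight sigma L mu x f d.
have C0 := proper_weight_ge0 sigma L mu_ge0 r.
have B_le : l * B <= 2 * C r * T.
  rewrite /B; under eq_bigr do rewrite mulr_sumr.
  rewrite exchange_big /= mulr_sumr (mulr_sumr _ _ _ (2 * C r)).
  rewrite big_seq [leRHS]big_seq; apply: ler_sum => f fr.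
  have blocked_ge0 := blocked_weight_ge0 sigma L mu_ge0 x f.
  have T0 : 0 <= \sum_(d <- L f) mu f d * blocked_weight sigma L mu x f d.
    by apply: sumr_ge0 => d _; rewrite mulr_ge0.
  apply: le_trans (ler_wpM2l (ltW l_gt0)
    (proper_weight_marginal_le sigma L mu_ge0 ur fr blocked_ge0)) _.
  have := IH f fr; have := proper_weight_ge0 sigma L mu_ge0 (rem f r); nra.
have T_le := sum_blocked_weight_le mu_ge0 E_uniform nbhd_weight_le xE ur rE.
have C_ge := proper_weight_rem_ge L mu_ge0 sigmaK us xs sE.
rewrite -/r -/B in C_ge; rewrite -/T in T_le.
have A_ge := list_weight_ge xE.
have K_le := l_ge_4kn.
set A := list_weight L mu x in C_ge T_le A_ge; set K := k%:R * n in T_le K_le.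
have h1 : 0 <= (A - l) * (C r * (l - 2 * K)).
  by rewrite !mulr_ge0 ?subr_ge0 //; have := l_gt0; lra.
have h2 : 0 <= l * C r * (l - 4 * K) by rewrite !mulr_ge0 ?subr_ge0 // ltW.
have h3 : C r * T <= C r * (A * K) by rewrite ler_wpM2l.
have h4 : l * (A * C r - B) <= l * C s by rewrite ler_wpM2l // ltW.
rewrite -(ler_pM2l l_gt0); nra.
Qed.

Lemma proper_weight_rem_le s x : uniq s -> {subset s <= E} -> x \in s ->
  l / 2 * C (rem x s) <= C s.
Proof.
have [m] := ubnP (size s); elim: m s x => // m IH s x sm us sE xs.
apply: proper_weight_rem_step => // f fr; apply: IH => //.
- by rewrite size_rem // -ltnS prednK // -has_predT; apply/hasP; exists x.
- exact: rem_uniq.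
- by move=> e /mem_rem /sE.
Qed.

Lemma proper_weight_gt0 s : uniq s -> {subset s <= E} -> 0 < C s.
Proof.
elim: s => [|x s IH] uxs sE; first by rewrite proper_weight_nil.
have := proper_weight_rem_le uxs sE (mem_head x s); rewrite /= eqxx.
apply: lt_le_trans; case/andP: uxs => _ us.
by rewrite mulr_gt0 ?divr_gt0 // IH // => e es; apply: sE; rewrite in_cons es orbT.
Qed.

Lemma exists_colouring : exists gamma, Lsigma_colouring E L sigma gamma.
Proof.
apply/proper_weight_colouring/proper_weight_gt0 => [|e].
  exact: enum_uniq.
by rewrite mem_enum.
Qed.

End Counting.

Unset Implicit Arguments.

Theorem lemma2p1 (R : realType) (V : finType) (E : {set {set V}}) (k : nat)
  (sigma : {set V} -> {set V} -> nat -> nat)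
  (L : {set V} -> seq nat) (mu : {set V} -> nat -> R) (l n : R) :
  uniform k E -> linear_hg E -> edge_correspondence E sigma ->
  (forall e, e \in E -> uniq (L e)) ->
  (forall e c, e \in E -> c \in L e -> 0 < mu e c <= 1) ->
  0 < l -> 0 < n ->
  (forall e, e \in E ->
     [/\ l / n >= 3 * expR 1 * k%:R,
         list_weight L mu e >= l &
         forall v c, v \in e -> c \in L e -> nbhd_weight E L mu sigma e v c <= n]) ->
  exists gamma : {set V} -> nat, Lsigma_colouring E L sigma gamma.
Proof.
move=> Ek _ sigmaK _ mu_range l_gt0 n_gt0 H.
have [E0|[e0 e0E]] := set_0Vmem E.
  by exists (fun _ => 0%N); split=> e; rewrite E0 inE.
have l_ge_4kn : 4 * (k%:R * n) <= l.
  have [ratio _ _] := H e0 e0E.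
  have e_ge2 : 2 <= expR 1 :> R by have := expR_ge1Dx (1 : R); lra.
  have k_ge0 : 0 <= k%:R :> R := ler0n _ _.
  have l_eq : l / n * n = l by rewrite divfK ?gt_eqF.
  nra.
pose mu0 e c := Num.max (mu e c) 0.
have mu0E e c : e \in E -> c \in L e -> mu0 e c = mu e c.
  by move=> eE cL; rewrite /mu0 max_l //; case/andP: (mu_range e c eE cL) => /ltW.
apply: (exists_colouring (mu := mu0) _ sigmaK Ek _ _ l_gt0 l_ge_4kn).
- by move=> e c; rewrite le_max lexx orbT.
- by move=> x xE; rewrite (eq_list_weight mu0E xE); case: (H x xE).
- move=> x v c xE vx cL; rewrite (eq_nbhd_weight sigma mu0E).
  by case: (H x xE) => _ _; apply.
Qed.
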